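(* In the setting described in the context, assume the face quadrature is exact for $Q^{N+N_f}$ on each face and the mortar quadrature on each face is exact for $Q^{N+N_m}$, with $N_f,N_m\ge 0$, and let $K=\min(N,N_f,N_m)$. Let $g\in Q^K(\hat D)$ and let $\mathbf{g}=\big[g(\hat{\mathbf{x}});\,g(\hat{\mathbf{x}}_f);\,g(\hat{\mathbf{x}}_m)\big]$ be the concatenated vector of values of $g$ at the volume nodes, face nodes and mortar nodes. Then for each $i=1,\dots,d$, $$\hat{M}^{-1}\begin{bmatrix} I & E^T & E^TE_{mf}^T\end{bmatrix}\hat{Q}_{i,m}\,\mathbf{g}$$ equals the vector of values of $\partial g/\partial \hat x_i$ at the volume nodes.
   Context: Fix $d\in\{2,3\}$, $N\ge 1$, and a 1D quadrature rule on $[-1,1]$ with $N+1$ distinct nodes $x_1,\dots,x_{N+1}$ (either Gauss–Legendre or Gauss–Lobatto nodes) and positive weights $w_1,\dots,w_{N+1}$; let $\ell_1,\dots,\ell_{N+1}$ be the degree-$N$ Lagrange basis at these nodes. Set $\hat M_{1D}=\mathrm{diag}(w_1,\dots,w_{N+1})$ and $(\hat Q_{1D})_{jk}=w_j\ell_k'(x_j)$. On the reference element $\hat D=[-1,1]^d$ the volume nodes $\hat{\mathbf x}$ are the tensor grid of the 1D nodes, $\hat M=\hat M_{1D}\otimes\cdots\otimes\hat M_{1D}$ ($d$ factors, diagonal matrix of tensor weights), and $\hat Q_i=A_1\otimes\cdots\otimes A_d$ with $A_i=\hat Q_{1D}$ and $A_k=\hat M_{1D}$ for $k\ne i$. The face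 nodes $\hat{\mathbf x}_f$ are, for each of the $2d$ faces $\{\hat x_k=\pm1\}$, the points with $\hat x_k=\pm1$ and the other coordinates ranging over the 1D nodes; each face node carries the weight equal to the product of the 1D weights of its other coordinates, and $\hat M_f$ is the diagonal matrix of these face weights. $E$ maps the values at volume nodes of a polynomial in $Q^N(\hat D)$ to its values at the face nodes. The reference normal component $\hat n_i$ at any point of the face $\{\hat x_k=\pm1\}$ equals $\pm\delta_{ik}$; $\hat B_{i,f}=\mathrm{diag}(\hat{\mathbf n}_{i,f})\hat M_f$ where $\hat{\mathbf n}_{i,f}$ holds $\hat n_i$ at the face nodes. On each face choose mortar nodes $\hat{\mathbf x}_m$ (lying on that face) with real weights; $\hat M_m$ is the diagonal matrix of all mortar weights; $E_{mf}$ is block diagonal over faces, its block for a face mapping values at the face nodes of a polynomial in $Q^N$ of the $d-1$ face coordinates to its values at that face's mortar nodes; $E_{fm}=\hat M_f^{-1}E_{mf}^T\hat M_m$; $\hat B_{i,m}=\mathrm{diag}(\hat{\mathbf n}_{i,m})\hat M_m$ with $\hat{\mathbf n}_{i,m}$ the values of $\hat n_i$ at the mortar nodes. The mortar-based hybridized SBP operator is the $3\times 3$ block matrix (blocks indexed by volume, face, mortar nodes) $$\hat Q_{i,m}=\frac12\begin{bmatrix}\hat Q_i-\hat Q_i^T & E^T\hat B_{i,f} & 0\\ -\hat B_{i,f}E & 0 & \hat B_{i,f}E_{fm}\\ 0 & -\hat B_{i,m}E_{mf} & \hat B_{i,m}\end{bmatrix}.$$ $Q^{N_1,\dots,N_k}$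 denotes tensor-product polynomials in $k$ variables of degree at most $N_j$ in the $j$-th variable, $Q^M=Q^{M,\dots,M}$. ''Face quadrature exact for $Q^{N+N_f}$'' means that on each face the face-node quadrature integrates every polynomial in $Q^{N+N_f}$ of the face coordinates exactly; similarly for the mortar quadrature. *)

From HB Require Import structures.
From mathcomp Require Import all_boot all_order all_algebra.
From mathcomp Require Import mpoly.
Set Implicit Arguments. Unset Strict Implicit. Unset Printing Implicit Defensive.
Import Order.TTheory GRing.Theory Num.Theory.
Local Open Scope ring_scope.

Section Defs.
Variables (R : realFieldType) (d N : nat).

(* exact integral over [-1,1] of x^n *)
Definition int1 (n : nat) : R := (1 - (-1) ^+ n.+1) / n.+1%:R.

Definition exact1 (x w : 'I_N.+1 -> R) (D : nat) : Prop :=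
  forall p : {poly R}, (size p <= D.+1)%N ->
    \sum_(j < N.+1) w j * p.[x j] = \sum_(n < size p) p`_n * int1 n.

(* Gauss-Legendre rule with N+1 nodes: distinct nodes, positive weights,
   exact for degree 2N+1 (this characterizes it uniquely). *)
Definition gauss_legendre (x w : 'I_N.+1 -> R) : Prop :=
  injective x /\ (forall j, 0 < w j) /\ exact1 x w (2 * N + 1).

(* Gauss-Lobatto rule with N+1 nodes: distinct nodes containing -1 and 1,
   positive weights, exact for degree 2N-1 (characterizes it uniquely). *)
Definition gauss_lobatto (x w : 'I_N.+1 -> R) : Prop :=
  [/\ injective x, (forall j, 0 < w j), (exists j, x j = -1), (exists j, x j = 1)
    & exact1 x w (2 * N - 1)].

Definition lagrange (x : 'I_N.+1 -> R) (k : 'I_N.+1) : {poly R} :=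
  \prod_(m < N.+1 | m != k) (('X - (x m)%:P) * ((x k - x m)^-1)%:P).

Definition M1D (w : 'I_N.+1 -> R) (j k : 'I_N.+1) : R := if j == k then w j else 0.
Definition Q1D (x w : 'I_N.+1 -> R) (j k : 'I_N.+1) : R :=
  w j * ((lagrange x k)^`()).[x j].

(* volume nodes: multi-indices into the 1D nodes *)
Definition vidx := {ffun 'I_d -> 'I_N.+1}.
(* faces {x_k = -1} (false) and {x_k = +1} (true) *)
Definition face := ('I_d * bool)%type.
(* face nodes of face f: multi-index with the k-th component normalized to ord0 *)
Definition fidx := {p : face * vidx | p.2 p.1.1 == ord0}.
Definition fface (q : fidx) : face := (val q).1.

Definition sgn (s : bool) : R := if s then 1 else -1.

Definition volpt (x : 'I_N.+1 -> R) (a : vidx) : 'I_d -> R := fun j => x (a j).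
Definition facept (x : 'I_N.+1 -> R) (q : fidx) : 'I_d -> R :=
  fun j => if j == (fface q).1 then sgn (fface q).2 else x ((val q).2 j).
(* tensor volume weights (diagonal of hat M) and face weights (diagonal of hat M_f) *)
Definition vw (w : 'I_N.+1 -> R) (a : vidx) : R := \prod_(j < d) w (a j).
Definition fw (w : 'I_N.+1 -> R) (q : fidx) : R :=
  \prod_(j < d | j != (fface q).1) w ((val q).2 j).

(* i-th component of the reference outward normal on face f *)
Definition nrm (i : 'I_d) (f : face) : R := if i == f.1 then sgn f.2 else 0.

(* hat Q_i = A_1 (x) ... (x) A_d  with A_i = Q1D, A_k = M1D otherwise *)
Definition Qhat (x w : 'I_N.+1 -> R) (i : 'I_d) (a b : vidx) : R :=
  \prod_(k < d) (if k == i then Q1D x w else M1D w) (a k) (b k).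

Definition inQ (K : nat) (p : {mpoly R[d]}) : Prop :=
  forall m, m \in msupp p -> forall l : 'I_d, (m l <= K)%N.
(* p is a polynomial in Q^D of the face coordinates of face {x_k = +-1}
   (i.e. independent of x_k, degree <= D in the others) *)
Definition inQface (k : 'I_d) (D : nat) (p : {mpoly R[d]}) : Prop :=
  forall m, m \in msupp p -> m k = 0%N /\ forall l : 'I_d, (m l <= D)%N.
(* exact integral over the face [-1,1]^(d-1) of such a polynomial *)
Definition faceint (k : 'I_d) (p : {mpoly R[d]}) : R :=
  \sum_(m <- msupp p) p@_m * \prod_(l < d | l != k) int1 (m l).

Section Blocks.
Variable midx : finType.
Variable mface : midx -> face.
Variables (x w : 'I_N.+1 -> R) (wm : midx -> R).
Variables (E : fidx -> vidx -> R) (Emf : midx -> fidx -> R).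

(* index set of the hybridized system: volume, face, mortar nodes *)
Definition hidx := ((vidx + fidx) + midx)%type.

Definition Efm (q : fidx) (mo : midx) : R := (fw w q)^-1 * Emf mo q * wm mo.

Definition Qim (i : 'I_d) (c c' : hidx) : R :=
  2^-1 *
  match c, c' with
  | inl (inl a), inl (inl b) => Qhat x w i a b - Qhat x w i b a
  | inl (inl a), inl (inr q) => E q a * (nrm i (fface q) * fw w q)
  | inl (inr q), inl (inl a) => - (nrm i (fface q) * fw w q) * E q a
  | inl (inr q), inr mo => (nrm i (fface q) * fw w q) * Efm q mo
  | inr mo, inl (inr q) => - (nrm i (mface mo) * wm mo) * Emf mo q
  | inr mo, inr mo' => if mo == mo' then nrm i (mface mo) * wm mo else 0
  | _, _ => 0
  end.

Definition Plift (a : vidx) (c : hidx) : R :=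
  match c with
  | inl (inl b) => if a == b then 1 else 0
  | inl (inr q) => E q a
  | inr mo => \sum_(q : fidx) E q a * Emf mo q
  end.

Definition mulmv (I J : finType) (A : I -> J -> R) (v : J -> R) : I -> R :=
  fun i => \sum_(j : J) A i j * v j.

Definition hybrid_deriv (i : 'I_d) (g : hidx -> R) : vidx -> R :=
  fun a => (vw w a)^-1 * mulmv Plift (mulmv (Qim i) g) a.

End Blocks.
End Defs.

Definition hvals (R : realFieldType) (d N : nat) (midx : finType)
  (x : 'I_N.+1 -> R) (xm : midx -> 'I_d -> R) (g : {mpoly R[d]})
  (c : hidx d N midx) : R :=
  match c with
  | inl (inl a) => g.@[volpt x a]
  | inl (inr q) => g.@[facept x q]
  | inr mo => g.@[xm mo]
  end.

(* Both sides of the theorem are linear in g, so it suffices to treat a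
   monomial X^m whose exponents are bounded by N, N_f and N_m.  For such a
   monomial with value vector g = [g; g_f; g_m]:
   - the face rows of Q_{i,m} g vanish, because E g = g_f (exactness of E) and
     E_fm g_m = g_f; the latter holds because the entries of E_mf are values of
     face Lagrange polynomials at the mortar nodes, so both the face and the
     mortar quadratures integrate the same polynomial (Efm_mono);
   - the mortar rows vanish, because E_mf g_f = g_m;
   - hence [I E^T E^T E_mf^T] Q_{i,m} g reduces to the volume row
     1/2 (Q_i g - Q_i^T g + E^T B_{i,f} g_f).  Every term factorizes over the
     tensor product into 1D sums, and the 1D summation-by-parts identity of the
     collocated Lagrange derivative (sbp_1d, valid since the rule is exact to
     degree 2N-1) shows that the last two terms add up to Q_i g.  Dividing by
     the tensor weight gives the derivative. *)

From Pilot Require Import Defs.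
From HB Require Import structures.
From mathcomp Require Import all_boot all_order all_algebra.
From mathcomp Require Import mpoly.
From mathcomp Require Import zify ring.
Set Implicit Arguments. Unset Strict Implicit. Unset Printing Implicit Defensive.
Import Order.TTheory GRing.Theory Num.Theory.
Local Open Scope ring_scope.

Section Lagrange1D.
Variables (R : realFieldType) (N : nat) (x : 'I_N.+1 -> R).
Hypothesis x_inj : injective x.

Lemma lagrange_node k j : (Defs.lagrange x k).[x j] = (j == k)%:R.
Proof.
rewrite /Defs.lagrange horner_prod.
have [->|njk] := eqVneq j k.
  rewrite big1 // => m mk; rewrite hornerM !hornerE mulfV //.
  by rewrite subr_eq0; apply: contra mk => /eqP /x_inj ->.
by rewrite (bigD1 j) //= hornerM !hornerE subrr !mul0r.
Qed.

(* Each Lagrange polynomial is a product of N affine factors. *)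
Lemma size_lagrange k : (size (Defs.lagrange x k) <= N.+1)%N.
Proof.
have affine m : (size (('X - (x m)%:P) * ((x k - x m)^-1)%:P)%R <= 2)%N.
  apply: leq_trans (size_polyMleq _ _) _; rewrite size_XsubC.
  by case: (size _) (size_polyC_leq1 ((x k - x m)^-1)) => [|[|]].
apply: leq_trans (size_poly_prod_leq _ _) _.
have : (\sum_(m | m != k) size (('X - (x m)%:P) * ((x k - x m)^-1)%:P)%R
         <= \sum_(m | m != k) 2)%N by apply: leq_sum => m _; apply: affine.
rewrite sum_nat_const cardC1 card_ord; set s := (\sum_(m | _) _)%N; lia.
Qed.

Lemma lagrange_interp (p : {poly R}) :
  (size p <= N.+1)%N -> \sum_j p.[x j] *: Defs.lagrange x j = p.
Proof.
move=> sp; apply/eqP; rewrite -subr_eq0; apply/eqP.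
set q := _ - p.
have sq : (size q <= N.+1)%N.
  apply: leq_trans (size_polyD _ _) _; rewrite geq_max size_polyN sp andbT.
  apply: leq_trans (size_sum _ _ _) _; apply/bigmax_leqP => j _.
  exact: leq_trans (size_scale_leq _ _) (size_lagrange _).
apply/eqP; apply: contraLR sq => nq; rewrite -ltnNge.
have -> : N.+1 = size [seq x j | j <- enum 'I_N.+1] by rewrite size_map size_enum_ord.
apply: max_poly_roots nq _ _; last by rewrite map_inj_uniq ?enum_uniq.
apply/allP => _ /mapP [k _ ->]; rewrite /root /q hornerD hornerN horner_sum.
rewrite (bigD1 k) //= big1 ?hornerZ ?lagrange_node ?eqxx ?mulr1 ?addr0 ?subrr //.
by move=> j jk; rewrite hornerZ lagrange_node eq_sym (negbTE jk) mulr0.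
Qed.

(* Hence the derivative of such a polynomial is the combination of the
   derivatives of the basis, which is what the matrix Q1D encodes. *)
Lemma lagrange_deriv_interp (p : {poly R}) t : (size p <= N.+1)%N ->
  \sum_j ((Defs.lagrange x j)^`()).[t] * p.[x j] = p^`().[t].
Proof.
move=> sp; rewrite -{2}(lagrange_interp sp).
rewrite (big_morph _ (@derivD _) (@deriv0 _)) horner_sum.
by apply: eq_bigr => j _; rewrite derivZ hornerZ mulrC.
Qed.

End Lagrange1D.

Lemma sum_coef_widen (R : ringType) (q : {poly R}) (c : nat -> R) M :
  (size q <= M)%N -> \sum_(n < size q) q`_n * c n = \sum_(n < M) q`_n * c n.
Proof.
move=> sq; rewrite (big_ord_widen M (fun n => q`_n * c n) sq) big_mkcond.
apply: eq_bigr => i _; case: ifP => // /negbT; rewrite -leqNgt => h.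
by rewrite nth_default // mul0r.
Qed.

Section Quadrature1D.
Variables (R : realFieldType) (N : nat) (x w : 'I_N.+1 -> R).

Lemma exact1_mono D D' : (D <= D')%N -> exact1 x w D' -> exact1 x w D.
Proof. by move=> le h p sp; apply: h; apply: leq_trans sp _. Qed.

Lemma gauss_rule_props : gauss_legendre x w \/ gauss_lobatto x w ->
  [/\ injective x, forall j, 0 < w j & exact1 x w (2 * N - 1)].
Proof.
case=> [[x_inj [w_pos ex]] | [x_inj w_pos _ _ ex]]; split => //.
by apply: exact1_mono ex; lia.
Qed.

(* A rule exact to degree D integrates derivatives of degree D+1 polynomials
   exactly: the fundamental theorem of calculus at the quadrature level. *)
Lemma quad_deriv D (p : {poly R}) : exact1 x w D -> (size p <= D.+2)%N ->
  \sum_j w j * p^`().[x j] = p.[1] - p.[-1].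
Proof.
move=> ex sp.
have [->|p0] := eqVneq p 0.
  by rewrite deriv0 big1 ?hornerE ?subrr ?oppr0 // => j _; rewrite hornerE mulr0.
have sd := lt_size_deriv p0.
rewrite ex; last by rewrite -ltnS; apply: leq_trans sd sp.
move: sd; case Ep: (size p) => [//|M] sd.
rewrite (@sum_coef_widen _ _ _ M) // !horner_coef Ep -sumrB big_ord_recl subrr add0r.
apply: eq_bigr => n _; rewrite coef_deriv /int1 /= /bump /= add1n expr1n.
rewrite -[p`_n.+1 *+ n.+1]mulr_natr -mulrA [_%:R * _]mulrC mulfVK ?pnatr_eq0 //.
by rewrite mulrBr !mulr1.
Qed.

Hypothesis x_inj : injective x.

(* 1D summation by parts, row a: (Q1D^T p + Q1D p)_a equals the boundary term
   l_a(1) p(1) - l_a(-1) p(-1) for p of degree <= N, as soon as the rule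
   integrates l_a p' + l_a' p (degree 2N-1) exactly. *)
Lemma sbp_1d D a (p : {poly R}) :
  exact1 x w D -> (2 * N <= D.+1)%N -> (size p <= N.+1)%N ->
  \sum_j w j * ((Defs.lagrange x a)^`()).[x j] * p.[x j] + w a * p^`().[x a] =
  (Defs.lagrange x a).[1] * p.[1] - (Defs.lagrange x a).[-1] * p.[-1].
Proof.
move=> ex hD sp.
have sz : (size (Defs.lagrange x a * p)%R <= D.+2)%N.
  apply: leq_trans (size_polyMleq _ _) _; have := size_lagrange x a; lia.
rewrite -!hornerM -(quad_deriv ex sz) derivM.
under [X in _ = X]eq_bigr => j _ do rewrite hornerD !hornerM mulrDr.
rewrite big_split /=; congr (_ + _); first by apply: eq_bigr => j _; rewrite mulrA.
rewrite (bigD1 a) //= big1 ?addr0; first by rewrite lagrange_node // eqxx mul1r.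
by move=> j ja; rewrite lagrange_node // (negbTE ja) mul0r mulr0.
Qed.

End Quadrature1D.

Section DegreeBounds.
Local Unset Implicit Arguments.
Context {R : realFieldType} {d : nat}.
Implicit Types (p q : {mpoly R[d]}) (D : 'I_d -> nat).

Definition deg_le D p : Prop := forall m, m \in msupp p -> forall l, (m l <= D l)%N.

Lemma deg_le_mono {D1 D2 p} :
  deg_le D1 p -> (forall l, D1 l <= D2 l)%N -> deg_le D2 p.
Proof. by move=> h le m mp l; apply: leq_trans (h m mp l) (le l). Qed.

Lemma deg_le_X (m : 'X_{1..d}) : deg_le (fun l => m l) 'X_[m].
Proof. by move=> m'; rewrite msuppX inE => /eqP ->. Qed.

Lemma deg_le_Z {D} c {p} : deg_le D p -> deg_le D (c *: p).
Proof. by move=> h m /msuppZ_le; apply: h. Qed.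

Lemma deg_le_mul {D1 D2 p q} :
  deg_le D1 p -> deg_le D2 q -> deg_le (fun l => D1 l + D2 l)%N (p * q).
Proof.
move=> h1 h2 m /msuppM_le /allpairsP [[m1 m2] /= [i1 i2 ->]] l.
by rewrite mnmDE leq_add // ?h1 ?h2.
Qed.

Lemma deg_le_sum (I : Type) (r : seq I) (P : pred I) (F : I -> {mpoly R[d]}) D :
  (forall i, P i -> deg_le D (F i)) -> deg_le D (\sum_(i <- r | P i) F i).
Proof.
move=> h; elim: r => [|i r IH]; first by rewrite big_nil => m; rewrite msupp0.
rewrite big_cons; case: ifP => Pi // m /msuppD_le; rewrite mem_cat => /orP [].
  exact: h.
exact: IH.
Qed.

Lemma deg_le_prod {I : Type} {r : seq I} {P : pred I} {F : I -> {mpoly R[d]}}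
    {D : I -> 'I_d -> nat} :
  (forall i, P i -> deg_le (D i) (F i)) ->
  deg_le (fun l => \sum_(i <- r | P i) D i l)%N (\prod_(i <- r | P i) F i).
Proof.
move=> h; elim: r => [|i r IH].
  by rewrite big_nil => m; rewrite msupp1 inE => /eqP -> l; rewrite mnm0E.
rewrite big_cons; case: ifP => Pi.
  by apply: deg_le_mono (deg_le_mul (h _ Pi) IH) _ => l; rewrite big_cons Pi.
by apply: deg_le_mono IH _ => l; rewrite big_cons Pi.
Qed.

Definition poly_in (j : 'I_d) (p : {poly R}) : {mpoly R[d]} :=
  \sum_(n < size p) p`_n *: 'X_j ^+ n.

Lemma poly_in_eval j (p : {poly R}) (v : 'I_d -> R) : (poly_in j p).@[v] = p.[v j].
Proof.
rewrite /poly_in (big_morph _ (@mevalD _ _ v) (@meval0 _ _ v)) horner_coef.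
by apply: eq_bigr => n _; rewrite mevalZ rmorphXn /= mevalXU.
Qed.

Lemma poly_in_deg j (p : {poly R}) :
  deg_le (fun l => if l == j then (size p).-1 else 0)%N (poly_in j p).
Proof.
apply: deg_le_sum => n _; apply: deg_le_Z; rewrite mpolyXn.
apply: deg_le_mono (deg_le_X _) _ => l; rewrite mulmnE mnm1E eq_sym.
case: (l == j) => //=.
by rewrite mul1n; case: n => /= n; case: (size p) => //= k; rewrite ltnS.
Qed.

Lemma deg_le_inQ {K p} : deg_le (fun _ => K) p -> inQ K p.
Proof. by []. Qed.

Lemma deg_le_inQface {k K K' p} : (K' <= K)%N ->
  deg_le (fun l => if l == k then 0 else K')%N p -> inQface k K p.
Proof.
move=> le h m mp; split; first by have := h m mp k; rewrite eqxx; case: (m k).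
by move=> l; have := h m mp l; case: (l == k) => // h1; [lia | apply: leq_trans h1 le].
Qed.

End DegreeBounds.

Section TensorLagrange.
Local Unset Implicit Arguments.
Context {R : realFieldType} {d N : nat}.
Variable x : 'I_N.+1 -> R.
Hypothesis x_inj : injective x.

Definition vol_lagrange (a : vidx d N) : {mpoly R[d]} :=
  \prod_(j < d) poly_in j (Defs.lagrange x (a j)).

Lemma vol_lagrange_eval a v :
  (vol_lagrange a).@[v] = \prod_j (Defs.lagrange x (a j)).[v j].
Proof.
rewrite /vol_lagrange (big_morph _ (@mevalM _ _ v) (@meval1 _ _ v)).
by apply: eq_bigr => j _; rewrite poly_in_eval.
Qed.

Lemma vol_lagrange_inQ a : inQ N (vol_lagrange a).
Proof.
apply: deg_le_inQ; apply: deg_le_mono (deg_le_prod (fun j _ => poly_in_deg j _)) _ => l.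
rewrite (bigD1 l) //= eqxx big1 ?addn0; last by move=> j /negbTE; rewrite eq_sym => ->.
by move: (size_lagrange x (a l)); case: (size _) => //= k; rewrite ltnS.
Qed.

Lemma vol_lagrange_node a b : (vol_lagrange a).@[volpt x b] = (b == a)%:R.
Proof.
rewrite vol_lagrange_eval /volpt; case: eqP => [->|/eqP ne].
  by rewrite big1 // => j _; rewrite lagrange_node // eqxx.
have [j hj] : exists j, b j != a j.
  apply/existsP; apply: contraR ne => /existsPn h; apply/eqP/ffunP => j.
  by have := h j; rewrite negbK => /eqP.
by rewrite (bigD1 j) //= lagrange_node // (negbTE hj) mul0r.
Qed.

Lemma fidx_eq {q q' : fidx d N} : fface q = fface q' ->
  (forall j, j != (fface q).1 -> (val q).2 j = (val q').2 j) -> q = q'.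
Proof.
move: q q' => [[f a] ha] [[f' a'] ha'] /=; rewrite /fface /= => ef h; subst f'.
apply: val_inj => /=; congr pair; apply/ffunP => j.
have [->|nj] := eqVneq j f.1; last exact: h.
by rewrite (eqP ha) (eqP ha').
Qed.

Definition face_lagrange (q : fidx d N) : {mpoly R[d]} :=
  \prod_(j < d | j != (fface q).1) poly_in j (Defs.lagrange x ((val q).2 j)).

Lemma face_lagrange_eval q v : (face_lagrange q).@[v] =
  \prod_(j < d | j != (fface q).1) (Defs.lagrange x ((val q).2 j)).[v j].
Proof.
rewrite /face_lagrange (big_morph _ (@mevalM _ _ v) (@meval1 _ _ v)).
by apply: eq_bigr => j _; rewrite poly_in_eval.
Qed.

Lemma face_lagrange_deg q :
  deg_le (fun l => if l == (fface q).1 then 0 else N)%N (face_lagrange q).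
Proof.
apply: deg_le_mono (deg_le_prod (fun j _ => poly_in_deg j _)) _ => l.
case: eqP => [->|/eqP nl].
  by rewrite big1 // => j /negbTE; rewrite eq_sym => ->.
rewrite (bigD1 l) //= eqxx big1 ?addn0; last first.
  by move=> j /andP [_ /negbTE]; rewrite eq_sym => ->.
by move: (size_lagrange x ((val q).2 l)); case: (size _) => //= k; rewrite ltnS.
Qed.

Lemma face_lagrange_node q q' :
  fface q' = fface q -> (face_lagrange q).@[facept x q'] = (q' == q)%:R.
Proof.
move=> ef; rewrite face_lagrange_eval /facept ef; case: eqP => [->|/eqP ne].
  by rewrite big1 // => j /negbTE ->; rewrite lagrange_node // eqxx.
have [j /andP [hj1 hj2]] :
    exists j, (j != (fface q).1) && ((val q').2 j != (val q).2 j).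
  apply/existsP; apply: contraR ne => /existsPn h; apply/eqP/fidx_eq => // j hj.
  by have := h j; rewrite -ef hj /= negbK => /eqP.
by rewrite (bigD1 j) //= (negbTE hj1) lagrange_node // (negbTE hj2) mul0r.
Qed.

Definition face_node_of (a : vidx d N) (i : 'I_d) (s : bool) : fidx d N.
Proof.
refine (exist _ ((i, s), [ffun j => if j == i then ord0 else a j]) _).
by rewrite /= ffunE eqxx.
Defined.

Lemma face_node_of_face a i s : fface (face_node_of a i s) = (i, s).
Proof. by []. Qed.

Lemma face_node_of_val a i s j :
  (val (face_node_of a i s)).2 j = if j == i then ord0 else a j.
Proof. by rewrite /= ffunE. Qed.

Lemma face_node_of_sides a i : face_node_of a i true != face_node_of a i false.
Proof. by apply/negP => /eqP /(congr1 (@fface d N)); rewrite !face_node_of_face. Qed.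

End TensorLagrange.

Section FaceTrace.
Local Unset Implicit Arguments.
Context {R : realFieldType} {d : nat}.

Definition mono_trace (m : 'X_{1..d}) (k : 'I_d) (s : bool) : {mpoly R[d]} :=
  (sgn R s ^+ m k) *: 'X_[[multinom (if l == k then 0 else m l)%N | l < d]].

Lemma mono_trace_eval (m : 'X_{1..d}) {k s v} :
  v k = sgn R s -> (mono_trace m k s).@[v] = 'X_[m].@[v].
Proof.
move=> vk; rewrite /mono_trace mevalZ !mevalX (bigD1 k) //= [X in _ = X](bigD1 k) //=.
rewrite mnmE eqxx expr0 mul1r vk; congr (_ * _).
by apply: eq_bigr => j /negbTE nj; rewrite mnmE nj.
Qed.

Lemma mono_trace_deg (m : 'X_{1..d}) k s :
  deg_le (fun l => if l == k then 0 else m l)%N (mono_trace m k s).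
Proof. by apply: deg_le_Z; apply: deg_le_mono (deg_le_X _) _ => l; rewrite mnmE. Qed.

End FaceTrace.

Section BlockBookkeeping.
Variables (R : realFieldType) (d N : nat) (w : 'I_N.+1 -> R).

Lemma sum_hidx (midx : finType) (F : hidx d N midx -> R) : \sum_c F c =
  \sum_a F (inl (inl a)) + \sum_q F (inl (inr q)) + \sum_mo F (inr mo).
Proof. by rewrite !big_sumType. Qed.

Lemma sum_on_face (f : face d) (F : fidx d N -> R) :
  (forall q, fface q != f -> F q = 0) -> \sum_q F q = \sum_(q | fface q == f) F q.
Proof. by move=> h; rewrite (bigID (fun q => fface q == f)) /= [X in _ + X]big1 ?addr0. Qed.

Lemma M1D_row (j0 : 'I_N.+1) (v : 'I_N.+1 -> R) : \sum_j M1D w j0 j * v j = w j0 * v j0.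
Proof.
rewrite (bigD1 j0) //= /M1D eqxx big1 ?addr0 // => j /negbTE.
by rewrite eq_sym => ->; rewrite mul0r.
Qed.

Lemma M1D_col (j0 : 'I_N.+1) (v : 'I_N.+1 -> R) : \sum_j M1D w j j0 * v j = w j0 * v j0.
Proof.
rewrite (bigD1 j0) //= /M1D eqxx big1 ?addr0 // => j /negbTE ->.
by rewrite mul0r.
Qed.

Hypothesis w_pos : forall j, 0 < w j.

Lemma vw_neq0 (a : vidx d N) : vw w a != 0.
Proof. by apply/prodf_neq0 => j _; rewrite gt_eqF. Qed.

Lemma fw_neq0 (q : fidx d N) : fw w q != 0.
Proof. by apply/prodf_neq0 => j _; rewrite gt_eqF. Qed.

End BlockBookkeeping.

Section HybridMonomial.
Variables (R : realFieldType) (d N Nf Nm : nat) (x w : 'I_N.+1 -> R)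
  (midx : finType) (mface : midx -> face d)
  (xm : midx -> 'I_d -> R) (wm : midx -> R)
  (E : fidx d N -> vidx d N -> R) (Emf : midx -> fidx d N -> R).
Hypothesis x_inj : injective x.
Hypothesis w_pos : forall j, 0 < w j.
Hypothesis exact_2N : exact1 x w (2 * N - 1).
Hypothesis mortar_on_face : forall mo, xm mo (mface mo).1 = sgn R (mface mo).2.
Hypothesis E_exact : forall p : {mpoly R[d]}, inQ N p ->
  forall q, \sum_(a : vidx d N) E q a * p.@[volpt x a] = p.@[facept x q].
Hypothesis Emf_block : forall mo q, mface mo != fface q -> Emf mo q = 0.
Hypothesis Emf_exact : forall (f : face d) (p : {mpoly R[d]}), inQface f.1 N p ->
  forall mo, mface mo = f ->
    \sum_(q : fidx d N | fface q == f) Emf mo q * p.@[facept x q] = p.@[xm mo].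
Hypothesis face_quad : forall (f : face d) (p : {mpoly R[d]}), inQface f.1 (N + Nf) p ->
  \sum_(q : fidx d N | fface q == f) fw w q * p.@[facept x q] = faceint f.1 p.
Hypothesis mortar_quad : forall (f : face d) (p : {mpoly R[d]}), inQface f.1 (N + Nm) p ->
  \sum_(mo : midx | mface mo == f) wm mo * p.@[xm mo] = faceint f.1 p.

Lemma E_entry q a : E q a = (vol_lagrange x a).@[facept x q].
Proof.
rewrite -E_exact; last exact: vol_lagrange_inQ.
rewrite (bigD1 a) //= vol_lagrange_node // eqxx mulr1 big1 ?addr0 //.
by move=> b /negbTE hb; rewrite vol_lagrange_node // hb mulr0.
Qed.

Lemma Emf_entry q mo : mface mo = fface q -> Emf mo q = (face_lagrange x q).@[xm mo].
Proof.
move=> hmo; rewrite -(Emf_exact _ hmo); last first.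
  by apply: (deg_le_inQface (K' := N)) => //; apply: face_lagrange_deg.
rewrite (bigD1 q) //= face_lagrange_node // eqxx mulr1 big1 ?addr0 //.
by move=> q' /andP [/eqP hq' ne]; rewrite face_lagrange_node // (negbTE ne) mulr0.
Qed.

Variable m : 'X_{1..d}.
Hypothesis m_N : forall l, (m l <= N)%N.
Hypothesis m_Nf : forall l, (m l <= Nf)%N.
Hypothesis m_Nm : forall l, (m l <= Nm)%N.

Local Notation Xm := ('X_[m] : {mpoly R[d]}).
Local Notation gm := (hvals x xm Xm).
Local Notation Qi i := (Qim mface x w wm E Emf i).

Lemma mono_inQ : inQ N Xm.
Proof. by apply: deg_le_inQ; apply: deg_le_mono (deg_le_X _) _. Qed.

Lemma E_mono q : \sum_a E q a * Xm.@[volpt x a] = Xm.@[facept x q].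
Proof. exact: E_exact mono_inQ q. Qed.

(* E_mf g_f = g_m, since on a face X^m agrees with its trace. *)
Lemma Emf_mono mo : \sum_q Emf mo q * Xm.@[facept x q] = Xm.@[xm mo].
Proof.
rewrite (@sum_on_face _ _ _ (mface mo)); last by move=> q; rewrite eq_sym => /Emf_block ->; rewrite mul0r.
have trace_inQ : inQface (mface mo).1 N (mono_trace m (mface mo).1 (mface mo).2 : {mpoly R[d]}).
  apply: (deg_le_inQface (K' := N)) => //.
  by apply: deg_le_mono (mono_trace_deg _ _ _) _ => l; case: (_ == _).
rewrite -(mono_trace_eval m (mortar_on_face mo)) -(Emf_exact trace_inQ erefl).
by apply: eq_bigr => q /eqP hq; rewrite mono_trace_eval // /facept hq eqxx.
Qed.

Lemma lagrange_trace_inQface (q : fidx d N) D : (forall l, m l <= D)%N ->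
  inQface (fface q).1 (N + D) (face_lagrange x q * mono_trace m (fface q).1 (fface q).2).
Proof.
move=> hD; apply: (deg_le_inQface (K' := (N + D)%N)) => //.
apply: deg_le_mono (deg_le_mul (face_lagrange_deg x q) (mono_trace_deg _ _ _)) _ => l.
by case: (_ == _) => //; rewrite leq_add2l.
Qed.

(* E_mf^T M_m g_m = M_f g_f: both sides are the integral over the face of
   the face Lagrange polynomial times X^m, computed by the mortar and by the
   face quadrature respectively. *)
Lemma Efm_mono q :
  \sum_mo Emf mo q * wm mo * Xm.@[xm mo] = fw w q * Xm.@[facept x q].
Proof.
set f := fface q.
rewrite (bigID (fun mo => mface mo == f)) /= [X in _ + X]big1 ?addr0; last first.
  by move=> mo hmo; rewrite Emf_block ?mul0r.
transitivity (\sum_(mo | mface mo == f) wm mo * (face_lagrange x q * mono_trace m f.1 f.2).@[xm mo]).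
  apply: eq_bigr => mo /eqP hmo; rewrite Emf_entry // mevalM mono_trace_eval; last first.
    by rewrite -hmo mortar_on_face.
  by rewrite mulrCA mulrA.
rewrite mortar_quad; last exact: lagrange_trace_inQface.
rewrite -face_quad; last exact: lagrange_trace_inQface.
rewrite (bigD1 q) //= big1 ?addr0.
  by rewrite mevalM face_lagrange_node // eqxx mul1r mono_trace_eval // /facept eqxx.
move=> q' /andP [/eqP hq' ne].
by rewrite mevalM face_lagrange_node // (negbTE ne) mul0r mulr0.
Qed.

Definition side_weight (a : vidx d N) (i : 'I_d) : R :=
  \prod_(k < d | k != i) (w (a k) * x (a k) ^+ m k).

(* (Q_i g)_a, factorized over the tensor product; the i-th factor is the
   collocated derivative of x^(m i), which is exact since m i <= N. *)
Lemma Qhat_row a i : \sum_b Qhat x w i a b * Xm.@[volpt x b] =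
  side_weight a i * (w (a i) * (x (a i) ^+ (m i).-1 *+ m i)).
Proof.
transitivity (\prod_k \sum_j ((if k == i then Q1D x w else M1D w) (a k) j * x j ^+ m k)).
  by rewrite bigA_distr_bigA; apply: eq_bigr => b _; rewrite /Qhat mevalX -big_split.
rewrite (bigD1 i) //= eqxx mulrC; congr (_ * _).
  by apply: eq_bigr => k /negbTE ->; rewrite M1D_row.
have sX : (size ('X^(m i) : {poly R}) <= N.+1)%N by rewrite size_polyXn ltnS.
rewrite /Q1D; under eq_bigr => j _ do rewrite -mulrA.
rewrite -mulr_sumr; congr (_ * _).
have := lagrange_deriv_interp x_inj (x (a i)) sX.
rewrite derivXn hornerMn hornerXn => <-.
by apply: eq_bigr => j _; rewrite hornerXn.
Qed.

Lemma Qhat_col a i : \sum_b Qhat x w i b a * Xm.@[volpt x b] =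
  side_weight a i * \sum_j w j * ((Defs.lagrange x (a i))^`()).[x j] * x j ^+ m i.
Proof.
transitivity (\prod_k \sum_j ((if k == i then Q1D x w else M1D w) j (a k) * x j ^+ m k)).
  by rewrite bigA_distr_bigA; apply: eq_bigr => b _; rewrite /Qhat mevalX -big_split.
rewrite (bigD1 i) //= eqxx mulrC; congr (_ * _).
by apply: eq_bigr => k /negbTE ->; rewrite M1D_col.
Qed.

Lemma boundary_term_on a i s :
  E (face_node_of a i s) a * (nrm R i (fface (face_node_of a i s)) * fw w (face_node_of a i s))
    * Xm.@[facept x (face_node_of a i s)]
  = side_weight a i * ((Defs.lagrange x (a i)).[sgn R s] * sgn R s * sgn R s ^+ m i).
Proof.
rewrite E_entry vol_lagrange_eval mevalX /fw /nrm /facept !face_node_of_face /= eqxx.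
rewrite (bigD1 i) //= eqxx big1 ?mulr1; last first.
  by move=> j /negbTE hj; rewrite hj ffunE hj lagrange_node // eqxx.
rewrite [X in _ * X](bigD1 i) //= eqxx /side_weight big_split /=.
rewrite (eq_bigr (fun j => w (a j))); last by move=> j /negbTE hj; rewrite ffunE hj.
rewrite [X in _ * (_ * X) = _](eq_bigr (fun j => x (a j) ^+ m j)); last first.
  by move=> j /negbTE hj; rewrite hj ffunE hj.
set A := \prod_(j | _) w _; set B := \prod_(j | _) _.
ring.
Qed.

(* Every other face node contributes nothing: either the normal component
   vanishes, or a tangential Lagrange factor of E vanishes. *)
Lemma boundary_term_off a i q :
  q != face_node_of a i true -> q != face_node_of a i false ->
  E q a * (nrm R i (fface q) * fw w q) * Xm.@[facept x q] = 0.
Proof.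
move=> n1 n2; case hk: ((fface q).1 == i); last first.
  by rewrite /nrm eq_sym hk mul0r mulr0 mul0r.
have nq : q != face_node_of a i (fface q).2 by case: ((fface q).2).
have [j /andP [hj1 hj2]] : exists j, (j != i) && ((val q).2 j != a j).
  apply/existsP; apply: contraR nq => /existsPn h; apply/eqP/fidx_eq.
    by rewrite face_node_of_face -(eqP hk); case: (fface q).
  move=> j hj; rewrite face_node_of_val (eqP hk) in hj *; rewrite (negbTE hj).
  by have := h j; rewrite hj /= negbK => /eqP.
rewrite E_entry vol_lagrange_eval (bigD1 j) //= /facept (eqP hk) (negbTE hj1).
by rewrite lagrange_node // (negbTE hj2) !mul0r.
Qed.

(* (E^T B_i g_f)_a: only the two face nodes of a in direction i contribute. *)
Lemma boundary_sum a i :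
  \sum_q E q a * (nrm R i (fface q) * fw w q) * Xm.@[facept x q] =
  side_weight a i * ((Defs.lagrange x (a i)).[1] - (Defs.lagrange x (a i)).[-1] * (-1) ^+ m i).
Proof.
rewrite (bigD1 (face_node_of a i true)) //= (bigD1 (face_node_of a i false)) /=; last first.
  by rewrite eq_sym face_node_of_sides.
rewrite big1 ?addr0; last by move=> q /andP [n1 n2]; apply: boundary_term_off.
by rewrite !boundary_term_on /sgn expr1n !mulr1; ring.
Qed.

(* The face rows of Q_{i,m} g vanish: -B E g + B E_fm g_m = -B g_f + B g_f. *)
Lemma face_row_zero i q : mulmv (Qi i) gm (inl (inr q)) = 0.
Proof.
rewrite /mulmv sum_hidx /Qim /=.
rewrite [X in _ + X + _]big1 ?addr0; last by move=> q' _; rewrite mulr0 mul0r.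
set c := nrm R i (fface q) * fw w q.
have vol : \sum_a 2^-1 * (- c * E q a) * Xm.@[volpt x a] = 2^-1 * - c * Xm.@[facept x q].
  by rewrite -E_mono mulr_sumr; apply: eq_bigr => a _; rewrite !mulrA.
have mort : \sum_mo 2^-1 * (c * Efm w wm Emf q mo) * Xm.@[xm mo] =
    2^-1 * c * (fw w q)^-1 * (fw w q * Xm.@[facept x q]).
  by rewrite -Efm_mono !mulr_sumr; apply: eq_bigr => mo _; rewrite /Efm; ring.
by rewrite vol mort mulrA divfK ?fw_neq0 //; ring.
Qed.

(* The mortar rows vanish: -B_m E_mf g_f + B_m g_m = -B_m g_m + B_m g_m. *)
Lemma mortar_row_zero i mo : mulmv (Qi i) gm (inr mo) = 0.
Proof.
rewrite /mulmv sum_hidx /Qim /=.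
rewrite [X in X + _ + _]big1 ?add0r; last by move=> a _; rewrite mulr0 mul0r.
set c := nrm R i (mface mo) * wm mo.
have face : \sum_q 2^-1 * (- c * Emf mo q) * Xm.@[facept x q] = 2^-1 * - c * Xm.@[xm mo].
  by rewrite -Emf_mono mulr_sumr; apply: eq_bigr => q _; rewrite !mulrA.
rewrite face (bigD1 mo) //= eqxx big1 ?addr0; first ring.
by move=> mo' /negbTE; rewrite eq_sym => ->; rewrite mulr0 mul0r.
Qed.

Lemma volume_row i a : mulmv (Qi i) gm (inl (inl a)) =
  2^-1 * (\sum_b Qhat x w i a b * Xm.@[volpt x b] - \sum_b Qhat x w i b a * Xm.@[volpt x b]
          + \sum_q E q a * (nrm R i (fface q) * fw w q) * Xm.@[facept x q]).
Proof.
rewrite /mulmv sum_hidx /Qim /=.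
rewrite [X in _ + X]big1 ?addr0; last by move=> mo _; rewrite mulr0 mul0r.
rewrite -sumrB !mulrDr !mulr_sumr; congr (_ + _); apply: eq_bigr => b _; ring.
Qed.

(* Since face and mortar rows vanish, applying [I E^T E^T E_mf^T] only keeps
   the volume row. *)
Lemma lift_volume_row i a :
  mulmv (Plift E Emf) (mulmv (Qi i) gm) a = mulmv (Qi i) gm (inl (inl a)).
Proof.
rewrite {1}/mulmv sum_hidx /=.
rewrite [X in _ + X + _]big1; last by move=> q _; rewrite face_row_zero mulr0.
rewrite [X in _ + X]big1; last by move=> mo _; rewrite mortar_row_zero mulr0.
rewrite !addr0 (bigD1 a) //= eqxx mul1r big1 ?addr0 //.
by move=> b /negbTE; rewrite eq_sym => ->; rewrite mul0r.
Qed.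

Lemma mono_deriv_weighted i a :
  vw w a * (Xm^`M(i)).@[volpt x a] =
  side_weight a i * (w (a i) * (x (a i) ^+ (m i).-1 *+ m i)).
Proof.
rewrite mderivX mevalZ mevalX /vw /side_weight /volpt big_split /=.
rewrite (bigD1 i) //= [X in _ * (_ * X) = _](bigD1 i) //= mnmBE mnm1E eqxx subn1.
have -> : \prod_(j < d | j != i) x (a j) ^+ (m - U_(i))%MM j =
          \prod_(j < d | j != i) x (a j) ^+ m j.
  by apply: eq_bigr => j hj; rewrite mnmBE mnm1E eq_sym (negbTE hj) subn0.
rewrite -mulr_natl; ring.
Qed.

Lemma hybrid_deriv_mono i a :
  hybrid_deriv mface x w wm E Emf i gm a = (Xm^`M(i)).@[volpt x a].
Proof.
have sX : (size ('X^(m i) : {poly R}) <= N.+1)%N by rewrite size_polyXn ltnS.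
have hD : (2 * N <= (2 * N - 1).+1)%N by lia.
have := sbp_1d x_inj (a i) exact_2N hD sX.
rewrite !hornerXn derivXn hornerMn hornerXn expr1n mulr1.
under eq_bigr do rewrite hornerXn.
move=> sbp.
rewrite /hybrid_deriv lift_volume_row volume_row Qhat_row Qhat_col boundary_sum -sbp.
apply: (mulfI (vw_neq0 w_pos a)); rewrite mulVKf ?vw_neq0 // mono_deriv_weighted.
by field.
Qed.

End HybridMonomial.

Lemma hybrid_deriv_lin (R : realFieldType) (d N : nat) (midx : finType)
    (mface : midx -> face d) (x w : 'I_N.+1 -> R) (wm : midx -> R)
    (E : fidx d N -> vidx d N -> R) (Emf : midx -> fidx d N -> R) (i : 'I_d)
    (T : Type) (r : seq T) (k : T -> R) (G : T -> hidx d N midx -> R)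
    (g : hidx d N midx -> R) (a : vidx d N) :
  (forall c, g c = \sum_(t <- r) k t * G t c) ->
  hybrid_deriv mface x w wm E Emf i g a =
  \sum_(t <- r) k t * hybrid_deriv mface x w wm E Emf i (G t) a.
Proof.
move=> hg; rewrite /hybrid_deriv /mulmv.
under eq_bigr => c _ do under eq_bigr => c' _ do rewrite hg mulr_sumr.
under eq_bigr => c _ do rewrite exchange_big /= mulr_sumr.
rewrite exchange_big /= mulr_sumr; apply: eq_bigr => t _.
rewrite mulrCA; congr (_ * _); rewrite mulr_sumr; apply: eq_bigr => c _.
rewrite mulrCA; congr (_ * _); rewrite mulr_sumr; apply: eq_bigr => c' _.
by rewrite mulrCA.
Qed.

Lemma meval_monomials (R : realFieldType) (d : nat) (g : {mpoly R[d]}) (v : 'I_d -> R) :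
  g.@[v] = \sum_(m <- msupp g) g@_m * ('X_[m] : {mpoly R[d]}).@[v].
Proof.
rewrite {1}(mpolyE g) (big_morph _ (@mevalD _ _ v) (@meval0 _ _ v)).
by apply: eq_bigr => m _; rewrite mevalZ.
Qed.

Lemma hvals_monomials (R : realFieldType) (d N : nat) (midx : finType)
    (x : 'I_N.+1 -> R) (xm : midx -> 'I_d -> R) (g : {mpoly R[d]}) (c : hidx d N midx) :
  hvals x xm g c = \sum_(m <- msupp g) g@_m * hvals x xm 'X_[m] c.
Proof. by case: c => [[a|q]|mo] /=; rewrite meval_monomials. Qed.

Lemma mderiv_monomials (R : realFieldType) (d : nat) (g : {mpoly R[d]}) i v :
  (g^`M(i)).@[v] = \sum_(m <- msupp g) g@_m * (('X_[m] : {mpoly R[d]})^`M(i)).@[v].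
Proof.
rewrite {1}(mpolyE g) (big_morph _ (@mderivD _ _ i) (@mderiv0 _ _ i)).
rewrite (big_morph _ (@mevalD _ _ v) (@meval0 _ _ v)).
by apply: eq_bigr => m _; rewrite mderivZ mevalZ.
Qed.

Theorem mainTheorem2 (R : realFieldType) (d N Nf Nm : nat)
  (x w : 'I_N.+1 -> R)
  (midx : finType) (mface : midx -> face d)
  (xm : midx -> 'I_d -> R) (wm : midx -> R)
  (E : fidx d N -> vidx d N -> R) (Emf : midx -> fidx d N -> R) :
  (d == 2)%N || (d == 3)%N ->
  (1 <= N)%N ->
  gauss_legendre x w \/ gauss_lobatto x w ->
  (* mortar nodes lie on their face *)
  (forall mo, xm mo (mface mo).1 = sgn R (mface mo).2) ->
  (* E maps volume values of Q^N polynomials to their face values *)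
  (forall p : {mpoly R[d]}, inQ N p ->
     forall q, \sum_(a : vidx d N) E q a * p.@[volpt x a] = p.@[facept x q]) ->
  (* E_mf is block diagonal over faces ... *)
  (forall mo q, mface mo != fface q -> Emf mo q = 0) ->
  (* ... and on each face maps face values of Q^N face polynomials to mortar values *)
  (forall (f : face d) (p : {mpoly R[d]}), inQface f.1 N p ->
     forall mo, mface mo = f ->
       \sum_(q : fidx d N | fface q == f) Emf mo q * p.@[facept x q] = p.@[xm mo]) ->
  (* face quadrature exact for Q^(N+Nf) on each face *)
  (forall (f : face d) (p : {mpoly R[d]}), inQface f.1 (N + Nf) p ->
     \sum_(q : fidx d N | fface q == f) fw w q * p.@[facept x q] = faceint f.1 p) ->
  (* mortar quadrature exact for Q^(N+Nm) on each face *)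
  (forall (f : face d) (p : {mpoly R[d]}), inQface f.1 (N + Nm) p ->
     \sum_(mo : midx | mface mo == f) wm mo * p.@[xm mo] = faceint f.1 p) ->
  forall g : {mpoly R[d]}, inQ (minn N (minn Nf Nm)) g ->
  forall (i : 'I_d) (a : vidx d N),
    hybrid_deriv mface x w wm E Emf i (hvals x xm g) a = (g^`M(i)).@[volpt x a].
Proof.
move=> _ _ rule on_face E_exact Emf_block Emf_exact face_quad mortar_quad g g_deg i a.
have [x_inj w_pos exact_2N] := gauss_rule_props rule.
erewrite hybrid_deriv_lin; last exact: hvals_monomials.
rewrite mderiv_monomials.
apply: eq_big_seq => m m_supp; congr (_ * _).
have m_le l : (m l <= minn N (minn Nf Nm))%N := g_deg m m_supp l.
apply: (hybrid_deriv_mono x_inj w_pos exact_2N on_face E_exact Emf_block Emf_exact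
          face_quad mortar_quad) => l; have := m_le l; lia.
Qed.
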